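(* Let $\mu^\ast$ be an upper quasi-density on $\mathbb{H}$, let $A\subseteq B\subseteq\mathbb{H}$ with $\mu^\ast(A)<\mu^\ast(B)$, and let $a,b\in\mathbb{R}$ with $\mu^\ast(A)\le a<b\le\mu^\ast(B)$. Then for every integer $k>(b-a)^{-1}$ there exist $\mathcal{H}_0\subseteq\{0,1,\dots,k-1\}$ and $h_0\in\{0,1,\dots,k-1\}$ such that $$a<\mu^\ast\big(A\cup(B\cap\mathcal{V}_{k,\mathcal{H}_0})\big)<b\le\mu^\ast\big(A\cup(B\cap\mathcal{V}_{k,\mathcal{H}_0\cup\{h_0\}})\big),$$ where $\mathcal{V}_{k,\mathcal{H}}:=\bigcup_{h\in\mathcal{H}}(k\cdot\mathbb{H}+h)$.
   Context: $\mathbb{N}=\{0,1,2,\dots\}$, $\mathbb{N}^+=\{1,2,\dots\}$; $\mathbb{H}$ is one of $\mathbb{Z},\mathbb{N},\mathbb{N}^+$. For $X\subseteq\mathbb{H}$, $k\in\mathbb{N}^+$, $h\in\mathbb{N}$, $k\cdot X+h:=\{kx+h:x\in X\}$. An upper quasi-density on $\mathbb{H}$ is a function $\mu^\ast:\mathcal{P}(\mathbb{H})\to\mathbb{R}$ with $\mu^\ast(\mathbb{H})=1$, $\mu^\ast(X)\le1$ for all $X$, $\mu^\ast(X\cup Y)\le\mu^\ast(X)+\mu^\ast(Y)$ for all $X,Y$, and $\mu^\ast(k\cdot X+h)=\frac1k\mu^\ast(X)$ for all $X\subseteq\mathbb{H}$, $h,k\in\mathbb{N}^+$. *)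

From Stdlib Require Import Reals ZArith.
Open Scope R_scope.

(* The three choices of the ambient set H, all viewed inside Z. *)
Inductive HKind := HZ | HN | HNpos.

Definition inH (H : HKind) (z : Z) : Prop :=
  match H with
  | HZ => True
  | HN => (0 <= z)%Z
  | HNpos => (1 <= z)%Z
  end.

Definition subsetZ (X Y : Z -> Prop) : Prop := forall z, X z -> Y z.
Definition unionZ (X Y : Z -> Prop) : Z -> Prop := fun z => X z \/ Y z.
Definition interZ (X Y : Z -> Prop) : Z -> Prop := fun z => X z /\ Y z.

Definition dil (k h : Z) (X : Z -> Prop) : Z -> Prop :=
  fun z => exists x, X x /\ z = (k * x + h)%Z.

(* Upper quasi-density on H; mu is only constrained on subsets of H. *)
Definition is_upper_quasi_density (H : HKind) (mu : (Z -> Prop) -> R) : Prop :=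
  mu (inH H) = 1 /\
  (forall X, subsetZ X (inH H) -> mu X <= 1) /\
  (forall X Y, subsetZ X (inH H) -> subsetZ Y (inH H) ->
     mu (unionZ X Y) <= mu X + mu Y) /\
  (forall X (k h : Z), subsetZ X (inH H) -> (1 <= k)%Z -> (1 <= h)%Z ->
     mu (dil k h X) = / IZR k * mu X).

Definition Vset (H : HKind) (k : Z) (Hs : Z -> Prop) : Z -> Prop :=
  fun z => exists h, Hs h /\ dil k h (inH H) z.

(* Adjoin to A the traces on B of the residue classes k.H + 0, k.H + 1, ...
   one at a time.  Each step raises mu* by at most 1/k < b - a, since a
   residue class minus its least element is a dilate of a subset of H and
   single points are null (as k.{m} + h can be written in two ways).  The
   first stage is A and the last one differs from B by a finite set, so the
   value b is crossed at some step. *)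
From Stdlib Require Import Reals ZArith Lra Lia Classical
  FunctionalExtensionality PropExtensionality.
Open Scope R_scope.

Lemma mu_ext (mu : (Z -> Prop) -> R) (X Y : Z -> Prop) :
  (forall z, X z <-> Y z) -> mu X = mu Y.
Proof.
  intro E; f_equal; extensionality z; apply propositional_extensionality; apply E.
Qed.

Lemma dil_subset_inH (H : HKind) (X : Z -> Prop) (k h : Z) :
  subsetZ X (inH H) -> (1 <= k)%Z -> (1 <= h)%Z -> subsetZ (dil k h X) (inH H).
Proof.
  intros HX Hk Hh z [x [Xx ->]]; specialize (HX x Xx).
  destruct H; simpl in *; auto; nia.
Qed.

(* The least element of H; the value 0 for H = Z is arbitrary. *)
Definition Hmin (H : HKind) : Z := match H with HNpos => 1%Z | _ => 0%Z end.

Lemma inH_pred_or_min (H : HKind) (x : Z) :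
  inH H x -> inH H (x - 1) \/ x = Hmin H.
Proof. destruct H; simpl; lia. Qed.

Lemma inH_div_or_small (H : HKind) (k z : Z) :
  (0 < k)%Z -> inH H z -> inH H (z / k) \/ (0 <= z < k)%Z.
Proof.
  intros Hk Hz.
  assert (0 <= z -> 0 <= z / k)%Z by (intro; apply Z.div_pos; lia).
  destruct H; simpl in *; auto.
  destruct (Z.lt_ge_cases z k); [right; lia | left; apply Z.div_le_lower_bound; lia].
Qed.

Section UpperQuasiDensity.

Variables (H : HKind) (mu : (Z -> Prop) -> R).
Hypothesis Hmu : is_upper_quasi_density H mu.

Lemma mu_le1 (X : Z -> Prop) : subsetZ X (inH H) -> mu X <= 1.
Proof. apply Hmu. Qed.

Lemma mu_dil (X : Z -> Prop) (k h : Z) :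
  subsetZ X (inH H) -> (1 <= k)%Z -> (1 <= h)%Z -> mu (dil k h X) = / IZR k * mu X.
Proof. apply Hmu. Qed.

Lemma mu_cover (X Y Z0 : Z -> Prop) :
  subsetZ Y (inH H) -> subsetZ Z0 (inH H) -> (forall z, X z <-> Y z \/ Z0 z) ->
  mu X <= mu Y + mu Z0.
Proof.
  intros HY HZ E; rewrite (mu_ext mu X (unionZ Y Z0)) by exact E; now apply Hmu.
Qed.

Lemma mu_nonneg (X : Z -> Prop) : subsetZ X (inH H) -> 0 <= mu X.
Proof.
  intro HX; enough (mu X <= mu X + mu X) by lra.
  apply mu_cover; auto; tauto.
Qed.

(* 1.{e} + (e + h) and 2.{e} + h are the same point, so mu {e} = mu {e} / 2. *)
Lemma mu_subsingleton (Y : Z -> Prop) (e : Z) :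
  subsetZ Y (inH H) -> (forall z, Y z -> z = e) -> mu Y = 0.
Proof.
  intros HY He.
  set (h := Z.max 1 (1 - e)).
  pose proof (mu_dil Y 1 (e + h) HY ltac:(lia) ltac:(unfold h; lia)) as E1.
  pose proof (mu_dil Y 2 h HY ltac:(lia) ltac:(unfold h; lia)) as E2.
  rewrite (mu_ext mu (dil 1 (e + h) Y) (dil 2 h Y)) in E1.
  - simpl in E1, E2; lra.
  - intro z; split; intros [x [Yx ->]]; pose proof (He x Yx); subst x;
      exists e; split; auto; lia.
Qed.

Lemma mu_bounded (n : nat) (Y : Z -> Prop) :
  subsetZ Y (inH H) -> (forall z, Y z -> (0 <= z < Z.of_nat n)%Z) -> mu Y = 0.
Proof.
  revert Y; induction n as [|n IH]; intros Y HY Hb.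
  - apply (mu_subsingleton Y 0); auto; intros z Yz; specialize (Hb z Yz); lia.
  - set (Ylow := fun z => Y z /\ (z < Z.of_nat n)%Z).
    set (Ytop := fun z => Y z /\ z = Z.of_nat n).
    assert (Slow : subsetZ Ylow (inH H)) by (intros z [Yz _]; auto).
    assert (Stop : subsetZ Ytop (inH H)) by (intros z [Yz _]; auto).
    assert (Le : mu Y <= mu Ylow + mu Ytop).
    { apply mu_cover; auto; intro z; unfold Ylow, Ytop; split; [|tauto].
      intro Yz; specialize (Hb z Yz); destruct (Z.lt_ge_cases z (Z.of_nat n));
        [left | right]; split; auto; lia. }
    rewrite (IH Ylow Slow) in Le by (intros z [Yz Hz]; specialize (Hb z Yz); lia).
    rewrite (mu_subsingleton Ytop (Z.of_nat n) Stop) in Le by (intros z [_ ->]; auto).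
    pose proof (mu_nonneg Y HY); lra.
Qed.

(* Drop the least element of the residue class; the rest is
   k.X' + (j + k) with X' the preimage x |-> k x + j + k inside H. *)
Lemma mu_inter_residue_le (B : Z -> Prop) (k j : Z) :
  subsetZ B (inH H) -> (1 <= k)%Z -> (0 <= j)%Z ->
  mu (interZ B (dil k j (inH H))) <= / IZR k.
Proof.
  intros HB Hk Hj.
  set (Y := interZ B (dil k j (inH H))).
  set (X' := fun x => inH H x /\ Y (k * x + j + k)%Z).
  set (E := fun z => Y z /\ ~ dil k (j + k) X' z).
  assert (SX : subsetZ X' (inH H)) by (intros z [Hz _]; auto).
  assert (SE : subsetZ E (inH H)) by (intros z [[Bz _] _]; auto).
  assert (Cover : mu Y <= mu (dil k (j + k) X') + mu E).
  { apply mu_cover; auto.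
    - apply dil_subset_inH; auto; lia.
    - intro z; unfold E; split.
      + intro Yz; destruct (classic (dil k (j + k) X' z)); auto.
      + intros [[x [[_ Yx] ->]] | [Yz _]]; auto.
        now replace (k * x + (j + k))%Z with (k * x + j + k)%Z by lia. }
  assert (NullE : mu E = 0).
  { apply (mu_subsingleton E (k * Hmin H + j)); auto.
    intros z [[Bz [x [Hx ->]]] nd].
    destruct (inH_pred_or_min H x Hx) as [Hx1 | ->]; auto.
    exfalso; apply nd; exists (x - 1)%Z; split; [split; auto | lia].
    unfold Y, interZ; replace (k * (x - 1) + j + k)%Z with (k * x + j)%Z by lia.
    split; auto; exists x; auto. }
  rewrite NullE, (mu_dil X' k (j + k) SX Hk ltac:(lia)) in Cover.
  assert (0 < / IZR k) by (apply Rinv_0_lt_compat, IZR_lt; lia).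
  pose proof (mu_le1 X' SX); pose proof (mu_nonneg X' SX); nra.
Qed.

End UpperQuasiDensity.

Definition fill (H : HKind) (k : Z) (A B : Z -> Prop) (j : nat) : Z -> Prop :=
  unionZ A (interZ B (Vset H k (fun h => (0 <= h < Z.of_nat j)%Z))).

Lemma fill_subset (H : HKind) (k : Z) (A B : Z -> Prop) (j : nat) :
  subsetZ A B -> subsetZ B (inH H) -> subsetZ (fill H k A B j) (inH H).
Proof. intros HAB HB z [Az | [Bz _]]; auto. Qed.

Lemma fill_0 (H : HKind) (k : Z) (A B : Z -> Prop) (z : Z) :
  fill H k A B 0 z <-> A z.
Proof. split; [intros [Az | [_ [h [Hh _]]]]; auto; simpl in Hh; lia | now left]. Qed.

Lemma fill_succ (H : HKind) (k : Z) (A B : Z -> Prop) (j : nat) (z : Z) :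
  fill H k A B (S j) z <->
  fill H k A B j z \/ interZ B (dil k (Z.of_nat j) (inH H)) z.
Proof.
  unfold fill, unionZ, interZ, Vset; split.
  - intros [Az | [Bz [h [Hh D]]]]; auto.
    destruct (Z.eq_dec h (Z.of_nat j)) as [-> | ne]; auto.
    left; right; split; auto; exists h; split; auto; lia.
  - intros [[Az | [Bz [h [Hh D]]]] | [Bz D]]; auto; right; split; auto;
      [exists h | exists (Z.of_nat j)]; split; auto; lia.
Qed.

Lemma Vset_ext (H : HKind) (k : Z) (Hs Hs' : Z -> Prop) (z : Z) :
  (forall h, Hs h <-> Hs' h) -> Vset H k Hs z <-> Vset H k Hs' z.
Proof. intro E; split; intros [h [Hh D]]; exists h; split; auto; apply E; auto. Qed.

Section Fill.

Variables (H : HKind) (mu : (Z -> Prop) -> R) (k : Z) (A B : Z -> Prop).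
Hypotheses (Hmu : is_upper_quasi_density H mu)
  (HAB : subsetZ A B) (HBH : subsetZ B (inH H)) (Hk : (1 <= k)%Z).

Lemma mu_fill_succ_le (j : nat) :
  mu (fill H k A B (S j)) <= mu (fill H k A B j) + / IZR k.
Proof.
  pose proof (mu_inter_residue_le H mu Hmu B k (Z.of_nat j) HBH Hk ltac:(lia)).
  enough (mu (fill H k A B (S j)) <=
          mu (fill H k A B j) + mu (interZ B (dil k (Z.of_nat j) (inH H)))) by lra.
  apply (mu_cover H mu Hmu); [apply fill_subset; auto | intros z [Bz _]; auto |].
  apply fill_succ.
Qed.

(* Every point of B lies in some class k.H + r with 0 <= r < k, except
   (for H = N+) possibly the points 0 <= z < k. *)
Lemma mu_le_fill_top : mu B <= mu (fill H k A B (Z.to_nat k)).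
Proof.
  set (F := fill H k A B (Z.to_nat k)).
  set (Rest := fun z => B z /\ ~ F z).
  assert (SR : subsetZ Rest (inH H)) by (intros z [Bz _]; auto).
  assert (NullRest : mu Rest = 0).
  { apply (mu_bounded H mu Hmu (Z.to_nat k) Rest SR).
    intros z [Bz nz]; rewrite Z2Nat.id by lia.
    destruct (inH_div_or_small H k z ltac:(lia) (HBH z Bz)) as [Hq | ?]; auto.
    exfalso; apply nz; right; split; auto.
    pose proof (Z.mod_pos_bound z k ltac:(lia)).
    exists (z mod k)%Z; split; [rewrite Z2Nat.id; lia |].
    exists (z / k)%Z; split; auto; apply Z.div_mod; lia. }
  enough (mu B <= mu F + mu Rest) by lra.
  apply (mu_cover H mu Hmu); [apply fill_subset; auto | auto |].
  intro z; unfold Rest, F; split.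
  - intro Bz; destruct (classic (fill H k A B (Z.to_nat k) z)); auto.
  - intros [[Az | [Bz _]] | [Bz _]]; auto.
Qed.

End Fill.

Lemma first_crossing (P : nat -> Prop) (n : nat) :
  ~ P 0%nat -> P n -> exists j, (j < n)%nat /\ ~ P j /\ P (S j).
Proof.
  induction n as [|n IH]; intros H0 Hn; [contradiction|].
  destruct (classic (P n)) as [Pn | nPn].
  - destruct (IH H0 Pn) as [j [? ?]]; exists j; split; [lia | auto].
  - exists n; split; [lia | auto].
Qed.

Theorem mainTheorem8 (H : HKind) (mu : (Z -> Prop) -> R)
  (Hmu : is_upper_quasi_density H mu)
  (A B : Z -> Prop) (HAB : subsetZ A B) (HBH : subsetZ B (inH H))
  (Hlt : mu A < mu B) (a b : R)
  (Ha : mu A <= a) (Hab : a < b) (Hb : b <= mu B) :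
  forall k : Z, IZR k > / (b - a) ->
  exists (H0 : Z -> Prop) (h0 : Z),
    (forall h, H0 h -> (0 <= h < k)%Z) /\ (0 <= h0 < k)%Z /\
    a < mu (unionZ A (interZ B (Vset H k H0))) /\
    mu (unionZ A (interZ B (Vset H k H0))) < b /\
    b <= mu (unionZ A (interZ B (Vset H k (fun h => H0 h \/ h = h0)))).
Proof.
  intros k Hk.
  assert (Hk1 : (1 <= k)%Z).
  { enough (0 < k)%Z by lia.
    apply lt_IZR; pose proof (Rinv_0_lt_compat (b - a)); lra. }
  assert (Hstep : / IZR k < b - a).
  { rewrite <- (Rinv_inv (b - a)); apply Rinv_lt_contravar; [|lra].
    pose proof (Rinv_0_lt_compat (b - a)); apply Rmult_lt_0_compat; lra. }
  set (g := fun j => mu (fill H k A B j)).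
  assert (g0 : g 0%nat = mu A) by (apply mu_ext, fill_0).
  pose proof (mu_le_fill_top H mu k A B Hmu HAB HBH Hk1) as Htop.
  destruct (first_crossing (fun j => b <= g j) (Z.to_nat k)) as [j [Hj [Below Above]]];
    [rewrite g0; lra | exact (Rle_trans _ _ _ Hb Htop) |].
  pose proof (mu_fill_succ_le H mu k A B Hmu HAB HBH Hk1 j) as Step.
  exists (fun h => (0 <= h < Z.of_nat j)%Z), (Z.of_nat j).
  fold (fill H k A B j); fold (g j); unfold g in *.
  repeat split; try lia; try lra.
  rewrite (mu_ext mu _ (fill H k A B (S j))); [exact Above |].
  intro z; unfold fill, unionZ, interZ.
  rewrite (Vset_ext H k _ (fun h => (0 <= h < Z.of_nat (S j))%Z)); [tauto | intro h; lia].
Qed.
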